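(* Let $M \ge 1$ be an integer, let $q_1, \ldots, q_M \in [0,1]$, and let $\tau \ge 1$. Define \[ \chi(\gamma) = q_1 + \frac{q_2}{1!}\gamma + \frac{q_3}{2!}\gamma^2 + \cdots + \frac{q_M}{(M-1)!}\gamma^{M-1} \] and, for $\gamma \ge 0$, \[ f(\gamma) = \frac{\gamma\, \chi(\gamma)\, e^{-\gamma}}{e^{-\gamma} + \tau\left(1 - e^{-\gamma}\right)}. \] If $q_1 \le 2 q_2 \le 3 q_3 \le \cdots \le M q_M$, then $f$ is unimodal on $[0,\infty)$. In particular, $f$ is unimodal whenever $M \le 2$.
   Context: A function $f:[0,\infty)\to\mathbb{R}$ is called unimodal if it has a single maximum, i.e., there exists $\gamma^* \ge 0$ such that $f$ is nondecreasing on $[0,\gamma^*]$ and nonincreasing on $[\gamma^*,\infty)$. (Here $q_L$ is interpreted as the probability that all $L$ simultaneously transmitted packets are successfully decoded, and $\tau$ is the number of time slots in a busy period, but these interpretations are not needed for the statement.) *)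

From Stdlib Require Import Reals Lra Lia Factorial.
Open Scope R_scope.

(* chi(g) = q_1 + q_2/1! g + ... + q_M/(M-1)! g^(M-1)
   (sum_f_R0 f n sums f 0 + ... + f n, i.e. n+1 terms; here n = M-1). *)
Definition chi (M : nat) (q : nat -> R) (g : R) : R :=
  sum_f_R0 (fun k => q (S k) / INR (fact k) * g ^ k) (M - 1).

Definition fgain (M : nat) (q : nat -> R) (tau : R) (g : R) : R :=
  g * chi M q g * exp (- g) / (exp (- g) + tau * (1 - exp (- g))).

Definition unimodal (f : R -> R) : Prop :=
  exists gs : R, 0 <= gs /\
    (forall x y, 0 <= x -> x <= y -> y <= gs -> f x <= f y) /\
    (forall x y, gs <= x -> x <= y -> f y <= f x).

From Stdlib Require Import Reals Lra Lia Factorial.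
From Coquelicot Require Import Coquelicot.
Open Scope R_scope.

(* Write x chi(x) = N(x) = sum_i c_i x^i / i! with c_i = i q_i, and note that the
   denominator is D = tau - (tau - 1) e^{-x}. Then f' = e^{-x} S / D^2 with
   S = N' D - tau N, and S' = (N'' - N') D. When the c_i increase, every coefficient
   of N'' - N' is nonnegative except the last one, -c_M, so N'' - N' is positive
   and then negative; hence S, which starts at S(0) = q_1 >= 0 and is eventually
   negative (because S <= tau (N' - N), whose leading coefficient is negative),
   is nonnegative and then nonpositive, and f rises and then falls. For M <= 2,
   N'' - N' is affine with nonpositive slope, so the same argument applies. *)

Lemma INR_fact_S k : INR (fact (S k)) = INR (S k) * INR (fact k).
Proof. now rewrite <- mult_INR. Qed.

Definition taylor (a : nat -> R) (n : nat) (x : R) : R :=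
  sum_f_R0 (fun i => a i * x ^ i / INR (fact i)) n.

Lemma taylor_S a n x :
  taylor a (S n) x = taylor a n x + a (S n) * x ^ S n / INR (fact (S n)).
Proof. reflexivity. Qed.

Lemma taylor_ext a b n x :
  (forall i, (i <= n)%nat -> a i = b i) -> taylor a n x = taylor b n x.
Proof. intros Hab; apply sum_eq; intros i Hi; rewrite Hab by exact Hi; reflexivity. Qed.

Lemma taylor_pad a n x : a (S n) = 0 -> taylor a (S n) x = taylor a n x.
Proof. intros Ha; rewrite taylor_S, Ha; unfold Rdiv; ring. Qed.

Lemma taylor_minus a b n x :
  taylor (fun i => a i - b i) n x = taylor a n x - taylor b n x.
Proof.
  unfold taylor; rewrite <- minus_sum; apply sum_eq; intros i _.
  unfold Rdiv; ring.
Qed.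

Lemma taylor_at_0 a n : taylor a n 0 = a 0%nat.
Proof.
  induction n as [|n IH]; [unfold taylor; simpl; field|].
  rewrite taylor_S, IH, pow_ne_zero by lia; unfold Rdiv; ring.
Qed.

Lemma taylor_nonneg a n x :
  0 <= x -> (forall i, (i <= n)%nat -> 0 <= a i) -> 0 <= taylor a n x.
Proof.
  intros Hx Ha; apply Rle_trans with (sum_f_R0 (fun _ => 0) n).
  { rewrite sum_cte; lra. }
  apply sum_Rle; intros i Hi; unfold Rdiv.
  apply Rmult_le_pos; [apply Rmult_le_pos; [now apply Ha | now apply pow_le]|].
  left; apply Rinv_0_lt_compat, INR_fact_lt_0.
Qed.

Lemma is_derive_monomial_fact k x :
  is_derive (fun t => t ^ S k / INR (fact (S k))) x (x ^ k / INR (fact k)).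
Proof.
  apply (is_derive_ext (fun t => / INR (fact (S k)) * t ^ S k));
    [intros t; apply Rmult_comm|].
  replace (x ^ k / INR (fact k)) with (/ INR (fact (S k)) * (INR (S k) * 1 * x ^ pred (S k))).
  - apply is_derive_scal, is_derive_pow, (is_derive_id (K := R_AbsRing)).
  - rewrite INR_fact_S; simpl pred.
    field; split; [apply INR_fact_neq_0 | apply not_0_INR; lia].
Qed.

Lemma taylor_derive a n x :
  is_derive (taylor a (S n)) x (taylor (fun i => a (S i)) n x).
Proof.
  induction n as [|n IH].
  - unfold taylor; simpl; auto_derive; [easy | field].
  - apply (is_derive_ext
             (fun t => taylor a (S n) t + a (S (S n)) * (t ^ S (S n) / INR (fact (S (S n)))))).
    { intros t; rewrite (taylor_S a (S n)); unfold Rdiv; rewrite Rmult_assoc; reflexivity. }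
    rewrite taylor_S; unfold Rdiv at 2; rewrite Rmult_assoc.
    apply (is_derive_plus (taylor a (S n))); [exact IH|].
    apply is_derive_scal, is_derive_monomial_fact.
Qed.

Lemma taylor_le_abs_sum d k y :
  1 <= y -> taylor d k y <= y ^ k * sum_f_R0 (fun i => Rabs (d i)) k.
Proof.
  intros Hy; unfold taylor; rewrite scal_sum; apply sum_Rle; intros i Hi.
  assert (Hfact : 1 <= INR (fact i)).
  { apply (le_INR 1); pose proof (lt_O_fact i); lia. }
  assert (Hinv : 0 < / INR (fact i) <= 1).
  { split; [apply Rinv_0_lt_compat; lra|].
    rewrite <- Rinv_1; apply Rinv_le_contravar; lra. }
  assert (Habs : Rabs (d i * y ^ i) <= Rabs (d i) * y ^ k).
  { rewrite Rabs_mult, (Rabs_pos_eq (y ^ i)) by (apply pow_le; lra).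
    apply Rmult_le_compat_l; [apply Rabs_pos | apply Rle_pow; assumption]. }
  pose proof (Rle_abs (d i * y ^ i)); pose proof (Rabs_pos (d i * y ^ i)).
  unfold Rdiv; nra.
Qed.

Lemma taylor_lead_neg d n : d n < 0 -> exists y, 0 < y /\ taylor d n y < 0.
Proof.
  intros Hd; destruct n as [|k].
  { exists 1; split; [lra|]; unfold taylor; simpl; lra. }
  set (K := sum_f_R0 (fun i => Rabs (d i)) k).
  set (F := INR (fact (S k))).
  assert (HK : 0 <= K) by (apply cond_pos_sum; intros; apply Rabs_pos).
  assert (HF : 0 < F) by apply INR_fact_lt_0.
  (* past [y], the leading term outweighs the bound [y ^ k * K] on the others *)
  set (y := 1 + K * F / - d (S k)).
  assert (Hy : 1 <= y).
  { assert (0 <= K * F / - d (S k)); [|unfold y; lra].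
    apply Rmult_le_pos; [nra | left; apply Rinv_0_lt_compat; lra]. }
  exists y; split; [lra|].
  assert (Hyk : 0 < y ^ k) by (apply pow_lt; lra).
  assert (Hlead : d (S k) * y ^ S k / F = - y ^ k * (K + - d (S k) / F)).
  { unfold y; simpl; field; split; lra. }
  pose proof (taylor_le_abs_sum d k y Hy) as Hrest; fold K in Hrest.
  rewrite taylor_S; fold F; rewrite Hlead.
  assert (0 < - d (S k) / F) by (apply Rdiv_lt_0_compat; lra).
  nra.
Qed.

Lemma taylor_diff_neg_or_zero c n :
  (forall i, (i <= n)%nat -> 0 <= c i) -> c (S n) = 0 ->
  (forall i, (i <= n)%nat -> c i = 0) \/
  exists y, 0 < y /\ taylor (fun i => c (S i) - c i) n y < 0.
Proof.
  induction n as [|n IH]; intros Hc Htop.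
  - destruct (Req_dec (c 0%nat) 0) as [Hz|Hnz].
    + left; intros i Hi; replace i with 0%nat by lia; exact Hz.
    + right; apply taylor_lead_neg; cbv beta; rewrite Htop.
      specialize (Hc 0%nat (le_n 0)); lra.
  - destruct (Req_dec (c (S n)) 0) as [Hz|Hnz].
    + destruct IH as [Hall|[y [Hy Hneg]]]; [intros i Hi; apply Hc; lia | exact Hz | |].
      * left; intros i Hi.
        destruct (Nat.eq_dec i (S n)) as [->|]; [exact Hz | apply Hall; lia].
      * right; exists y; split; [exact Hy|].
        rewrite taylor_pad; [exact Hneg | cbv beta; rewrite Htop, Hz; ring].
    + right; apply taylor_lead_neg; cbv beta; rewrite Htop.
      specialize (Hc (S n) (le_n _)); lra.
Qed.

Definition single_crossing (g : R -> R) : Prop :=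
  forall x y, 0 < x <= y -> g x <= 0 -> g y <= 0.

Lemma taylor_single_crossing d n :
  (forall i, (i < n)%nat -> 0 <= d i) -> d n <= 0 -> single_crossing (taylor d n).
Proof.
  intros Hd Hn x y [Hx Hxy] Hnx.
  assert (Hscaled : x ^ n * taylor d n y <= y ^ n * taylor d n x).
  { unfold taylor; rewrite !scal_sum; apply sum_Rle; intros i Hi.
    assert (Hcross : x ^ n * y ^ i <= y ^ n * x ^ i).
    { replace n with (i + (n - i))%nat by lia; rewrite !pow_add.
      assert (x ^ (n - i) <= y ^ (n - i)) by (apply pow_incr; lra).
      assert (0 <= x ^ i * y ^ i) by (apply Rmult_le_pos; apply pow_le; lra).
      nra. }
    assert (Hfact : 0 < / INR (fact i)) by apply Rinv_0_lt_compat, INR_fact_lt_0.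
    destruct (Nat.eq_dec i n) as [->|Hne]; [right; unfold Rdiv; ring|].
    assert (0 <= d i) by (apply Hd; lia).
    unfold Rdiv.
    replace (d i * y ^ i * / INR (fact i) * x ^ n)
      with (d i * / INR (fact i) * (x ^ n * y ^ i)) by ring.
    replace (d i * x ^ i * / INR (fact i) * y ^ n)
      with (d i * / INR (fact i) * (y ^ n * x ^ i)) by ring.
    apply Rmult_le_compat_l; [apply Rmult_le_pos; lra | exact Hcross]. }
  assert (0 < x ^ n) by (apply pow_lt; lra).
  assert (0 < y ^ n) by (apply pow_lt; lra).
  nra.
Qed.

Lemma mul_chi M q x : x * chi (S M) q x = taylor (fun i => INR i * q i) (S M) x.
Proof.
  unfold chi; replace (S M - 1)%nat with M by lia.
  induction M as [|M IH].
  - unfold taylor; simpl; unfold Rdiv; rewrite Rinv_1; ring.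
  - rewrite tech5, Rmult_plus_distr_l, IH, (taylor_S _ (S M)), (INR_fact_S (S M)).
    simpl pow; field; split; [apply INR_fact_neq_0 | apply not_0_INR; lia].
Qed.

Lemma derive_mvt (F F' : R -> R) a b :
  a < b -> (forall x, a <= x <= b -> is_derive F x (F' x)) ->
  exists c, a < c < b /\ F b - F a = F' c * (b - a).
Proof.
  intros Hab HF.
  destruct (MVT_cor2 F F' a b Hab) as [c [Heq Hc]];
    [intros; apply is_derive_Reals, HF; assumption | exists c; split; assumption].
Qed.

Lemma nondecreasing_of_derive (F F' : R -> R) a b :
  a <= b -> (forall x, a <= x <= b -> is_derive F x (F' x)) ->
  (forall x, a < x < b -> 0 <= F' x) -> F a <= F b.
Proof.
  intros Hab HF Hpos; destruct (Req_dec a b) as [<-|Hne]; [lra|].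
  destruct (derive_mvt F F' a b) as [c [Hc Heq]]; [lra | assumption |].
  specialize (Hpos c Hc); nra.
Qed.

Lemma nonincreasing_of_derive (F F' : R -> R) a b :
  a <= b -> (forall x, a <= x <= b -> is_derive F x (F' x)) ->
  (forall x, a < x < b -> F' x <= 0) -> F b <= F a.
Proof.
  intros Hab HF Hneg.
  enough (- F a <= - F b) by lra.
  apply (nondecreasing_of_derive (fun t => - F t) (fun t => - F' t)); [assumption | |].
  - intros x Hx; apply (is_derive_opp F), HF, Hx.
  - intros x Hx; specialize (Hneg x Hx); lra.
Qed.

Lemma unimodal_of_derive_sign (F F' : R -> R) b :
  0 <= b -> (forall x, 0 <= x -> is_derive F x (F' x)) ->
  (forall x, 0 <= x < b -> 0 <= F' x) -> (forall x, b < x -> F' x <= 0) ->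
  unimodal F.
Proof.
  intros Hb HF Hup Hdown; exists b; split; [exact Hb | split].
  - intros x y Hx Hxy Hyb; apply (nondecreasing_of_derive F F'); [lra | |].
    + intros z Hz; apply HF; lra.
    + intros z Hz; apply Hup; lra.
  - intros x y Hbx Hxy; apply (nonincreasing_of_derive F F'); [lra | |].
    + intros z Hz; apply HF; lra.
    + intros z Hz; apply Hdown; lra.
Qed.

Lemma unimodal_ext (f g : R -> R) : (forall x, f x = g x) -> unimodal f -> unimodal g.
Proof.
  intros Hfg [b [Hb [Hup Hdown]]]; exists b; split; [exact Hb | split];
    intros; rewrite <- !Hfg; auto.
Qed.

Lemma sign_switch_point (g : R -> R) y0 :
  0 <= g 0 -> 0 <= y0 -> g y0 < 0 ->
  (forall x y, 0 <= x <= y -> g x < 0 -> g y <= 0) ->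
  exists b, 0 <= b /\ (forall z, 0 <= z < b -> 0 <= g z) /\ (forall z, b < z -> g z <= 0).
Proof.
  intros Hg0 Hy0 Hgy0 Hpersist.
  set (A := fun x => 0 <= x /\ forall z, 0 <= z <= x -> 0 <= g z).
  assert (HA0 : A 0) by (split; [lra | intros z Hz; replace z with 0 by lra; exact Hg0]).
  destruct (completeness A) as [b [Hub Hlub]].
  { exists y0; intros x [Hx Hnonneg].
    destruct (Rle_or_lt x y0) as [|Hlt]; [assumption|].
    specialize (Hnonneg y0); lra. }
  { exists 0; exact HA0. }
  assert (Hb : 0 <= b) by (apply Hub, HA0).
  exists b; split; [exact Hb | split].
  - intros z Hz; destruct (Rle_or_lt 0 (g z)) as [|Hneg]; [assumption|].
    enough (b <= z) by lra.
    apply Hlub; intros x [Hx Hnonneg].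
    destruct (Rle_or_lt x z) as [|Hlt]; [assumption|].
    specialize (Hnonneg z); lra.
  - intros z Hz; destruct (Rle_or_lt (g z) 0) as [|Hpos]; [assumption|].
    enough (z <= b) by lra.
    apply Hub; split; [lra|]; intros w Hw.
    destruct (Rle_or_lt 0 (g w)) as [|Hneg]; [assumption|].
    specialize (Hpersist w z Hw Hneg); lra.
Qed.

Lemma single_crossing_mul_pos (E D : R -> R) :
  (forall x, 0 < x -> 0 < D x) -> single_crossing E ->
  single_crossing (fun x => E x * D x).
Proof.
  intros HD HE x y Hxy Hx.
  assert (0 < D x) by (apply HD; lra).
  assert (0 < D y) by (apply HD; lra).
  assert (E x <= 0) by (destruct (Rle_or_lt (E x) 0); [assumption | nra]).
  specialize (HE x y Hxy ltac:(assumption)); nra.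
Qed.

Lemma nonpos_persists_of_derive (S G : R -> R) :
  (forall x, 0 <= x -> is_derive S x (G x)) -> single_crossing G -> 0 <= S 0 ->
  forall x y, 0 <= x <= y -> S x < 0 -> S y <= 0.
Proof.
  intros HS HG HS0 x y Hxy Hx.
  destruct (Rle_or_lt (S y) 0) as [|Hy]; [assumption | exfalso].
  assert (Hx0 : 0 < x) by (destruct (Req_dec x 0) as [->|]; lra).
  assert (Hxy' : x < y) by (destruct (Req_dec x y) as [->|]; lra).
  destruct (derive_mvt S G x y) as [c [Hc Hrise]]; [lra | intros; apply HS; lra |].
  destruct (derive_mvt S G 0 x) as [c' [Hc' Hfall]]; [lra | intros; apply HS; lra |].
  rewrite Rminus_0_r in Hfall.
  assert (G c' < 0) by (destruct (Rle_or_lt 0 (G c')) as [Hc'pos|]; [nra | assumption]).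
  assert (G c <= 0) by (apply (HG c' c); lra).
  nra.
Qed.

Definition denom (tau x : R) : R := exp (- x) + tau * (1 - exp (- x)).

Lemma denom_pos tau x : 0 <= tau -> 0 <= x -> 0 < denom tau x.
Proof.
  intros Htau Hx; unfold denom.
  assert (0 < exp (- x)) by apply exp_pos.
  assert (exp (- x) <= 1).
  { rewrite <- exp_0; destruct (Rle_lt_or_eq_dec 0 x Hx) as [Hlt|<-].
    - left; apply exp_increasing; lra.
    - rewrite Ropp_0; lra. }
  nra.
Qed.

Lemma denom_le tau x : 1 <= tau -> denom tau x <= tau.
Proof. intros Htau; unfold denom; pose proof (exp_pos (- x)); nra. Qed.

Lemma denom_derive tau x : is_derive (denom tau) x ((tau - 1) * exp (- x)).
Proof. unfold denom; auto_derive; [easy | ring]. Qed.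

Lemma exp_opp_derive x : is_derive (fun t => exp (- t)) x (- exp (- x)).
Proof. auto_derive; [easy | ring]. Qed.

Section TaylorGain.

Variables (m : nat) (c : nat -> R) (tau : R).
Hypothesis c_nonneg : forall i, 0 <= c i.
Hypothesis c_0 : c 0%nat = 0.
Hypothesis c_top : c (S (S m)) = 0.
Hypothesis tau_ge1 : 1 <= tau.

(* The degree is [S m]; padding [N] with the zero coefficient [c (S (S m))] keeps
   its first two derivatives in [taylor] form. *)
Let N x := taylor c (S (S m)) x.
Let N' x := taylor (fun i => c (S i)) (S m) x.
Let N'' x := taylor (fun i => c (S (S i))) m x.
Let slope x := N' x * denom tau x - tau * N x.

Lemma gain_derive x : 0 <= x ->
  is_derive (fun t => N t * exp (- t) / denom tau t) x
    (exp (- x) / denom tau x ^ 2 * slope x).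
Proof.
  intros Hx.
  replace (exp (- x) / denom tau x ^ 2 * slope x) with
    (((N' x * exp (- x) + N x * - exp (- x)) * denom tau x
     - N x * exp (- x) * ((tau - 1) * exp (- x))) / denom tau x ^ 2)
    by (unfold slope, denom, Rdiv; ring).
  apply (is_derive_div (fun t => N t * exp (- t)) (denom tau));
    [| apply denom_derive | apply Rgt_not_eq, denom_pos; lra].
  apply (Derive.is_derive_mult N (fun t => exp (- t)));
    [apply taylor_derive | apply exp_opp_derive].
Qed.

Lemma slope_derive x : is_derive slope x ((N'' x - N' x) * denom tau x).
Proof.
  replace ((N'' x - N' x) * denom tau x) with
    ((N'' x * denom tau x + N' x * ((tau - 1) * exp (- x))) - tau * N' x)
    by (unfold denom; ring).
  apply (is_derive_minus (fun t => N' t * denom tau t)).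
  - apply (Derive.is_derive_mult N'); [apply taylor_derive | apply denom_derive].
  - apply is_derive_scal, taylor_derive.
Qed.

Lemma N''_sub_N' x : N'' x - N' x = taylor (fun i => c (S (S i)) - c (S i)) m x.
Proof.
  rewrite taylor_minus; unfold N', N''.
  now rewrite (taylor_pad (fun i => c (S i))).
Qed.

Lemma slope_at_0 : 0 <= slope 0.
Proof.
  unfold slope, N, N', denom; rewrite !taylor_at_0, c_0, Ropp_0, exp_0.
  pose proof (c_nonneg 1); lra.
Qed.

Lemma slope_neg_or_coef_zero :
  (forall i, (i <= S m)%nat -> c i = 0) \/ exists y, 0 < y /\ slope y < 0.
Proof.
  destruct (taylor_diff_neg_or_zero c (S m)) as [Hzero|[y [Hy Hneg]]];
    [intros; apply c_nonneg | exact c_top | left; exact Hzero |].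
  right; exists y; split; [exact Hy|].
  (* [slope <= tau * (N' - N)] because [0 <= N'] and [denom <= tau] *)
  rewrite taylor_minus in Hneg.
  assert (HN : N y = taylor c (S m) y) by (apply taylor_pad, c_top).
  assert (HN' : 0 <= N' y) by (apply taylor_nonneg; [lra | intros; apply c_nonneg]).
  pose proof (denom_le tau y tau_ge1).
  change (taylor (fun i => c (S i)) (S m) y) with (N' y) in Hneg.
  unfold slope; rewrite HN; nra.
Qed.

Theorem unimodal_taylor_gain :
  single_crossing (taylor (fun i => c (S (S i)) - c (S i)) m) ->
  unimodal (fun x => N x * exp (- x) / denom tau x).
Proof.
  intros Hcross.
  destruct slope_neg_or_coef_zero as [Hzero|[y0 [Hy0 Hneg]]].
  - assert (Hgain : forall x, N x * exp (- x) / denom tau x = 0).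
    { intros x; unfold N; rewrite (taylor_ext c (fun _ => 0)).
      - unfold taylor, Rdiv; rewrite sum_eq_R0; [ring | intros; ring].
      - intros i Hi; destruct (Nat.eq_dec i (S (S m))) as [->|];
          [exact c_top | apply Hzero; lia]. }
    exists 0; split; [lra | split]; intros; rewrite !Hgain; lra.
  - destruct (sign_switch_point slope y0) as [b [Hb [Hup Hdown]]];
      [apply slope_at_0 | lra | exact Hneg | |].
    + apply (nonpos_persists_of_derive slope
               (fun x => taylor (fun i => c (S (S i)) - c (S i)) m x * denom tau x)).
      * intros x _; rewrite <- N''_sub_N'; apply slope_derive.
      * apply single_crossing_mul_pos; [intros; apply denom_pos; lra | exact Hcross].
      * apply slope_at_0.
    + apply (unimodal_of_derive_sign _ _ b Hb gain_derive).
      all: intros x Hx; assert (0 < exp (- x) / denom tau x ^ 2)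
        by (apply Rdiv_lt_0_compat; [apply exp_pos | apply pow_lt, denom_pos; lra]).
      * apply Rmult_le_pos; [lra | apply Hup, Hx].
      * pose proof (Hdown x Hx); nra.
Qed.

End TaylorGain.

Lemma single_crossing_of_nonincreasing (g : R -> R) :
  (forall x y, 0 < x <= y -> g y <= g x) -> single_crossing g.
Proof. intros Hg x y Hxy Hx; specialize (Hg x y Hxy); lra. Qed.

Lemma taylor_le1_nonincreasing d n x y :
  (n <= 1)%nat -> d n <= 0 -> x <= y -> taylor d n y <= taylor d n x.
Proof.
  intros Hn Hd Hxy; destruct n as [|[|n]]; [| |lia]; unfold taylor; simpl.
  - lra.
  - assert (d 1%nat * (y - x) <= 0) by nra; lra.
Qed.

Definition coef (M : nat) (q : nat -> R) (i : nat) : R :=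
  if (i <=? M)%nat then INR i * q i else 0.

Lemma coef_in M q i : (i <= M)%nat -> coef M q i = INR i * q i.
Proof. intros Hi; unfold coef; apply Nat.leb_le in Hi; now rewrite Hi. Qed.

Lemma coef_out M q i : (M < i)%nat -> coef M q i = 0.
Proof. intros Hi; unfold coef; apply Nat.leb_gt in Hi; now rewrite Hi. Qed.

Lemma coef_nonneg M q i :
  (forall j, (1 <= j <= M)%nat -> 0 <= q j) -> 0 <= coef M q i.
Proof.
  intros Hq; unfold coef; destruct (Nat.leb_spec i M); [|lra].
  destruct i as [|i]; [simpl; lra|].
  apply Rmult_le_pos; [apply pos_INR | apply Hq; lia].
Qed.

Lemma fgain_taylor m q tau x :
  fgain (S m) q tau x = taylor (coef (S m) q) (S (S m)) x * exp (- x) / denom tau x.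
Proof.
  unfold fgain; rewrite mul_chi, (taylor_pad (coef (S m) q)) by (apply coef_out; lia).
  rewrite (taylor_ext (coef (S m) q) (fun i => INR i * q i)) by (intros; apply coef_in; lia).
  reflexivity.
Qed.

Theorem lemma1 (M : nat) (q : nat -> R) (tau : R)
  (HM : (1 <= M)%nat)
  (Hq : forall i, (1 <= i <= M)%nat -> 0 <= q i <= 1)
  (Htau : 1 <= tau) :
  ((forall k, (1 <= k)%nat -> (k < M)%nat -> INR k * q k <= INR (S k) * q (S k)) ->
     unimodal (fgain M q tau))
  /\ ((M <= 2)%nat -> unimodal (fgain M q tau)).
Proof.
  destruct M as [|m]; [lia|].
  set (c := coef (S m) q).
  assert (Hc : forall i, 0 <= c i) by (intros; apply coef_nonneg; intros; apply Hq; lia).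
  assert (Htop : c (S (S m)) - c (S m) <= 0).
  { assert (c (S (S m)) = 0) by (apply coef_out; lia); pose proof (Hc (S m)); lra. }
  assert (Hgain : single_crossing (taylor (fun i => c (S (S i)) - c (S i)) m) ->
                  unimodal (fgain (S m) q tau)).
  { intros Hcross; apply (unimodal_ext _ _ (fun x => eq_sym (fgain_taylor m q tau x))).
    apply unimodal_taylor_gain; [exact Hc | | | exact Htau | exact Hcross].
    - unfold c, coef; simpl; ring.
    - apply coef_out; lia. }
  split.
  - intros Hmon; apply Hgain, taylor_single_crossing; [|exact Htop].
    intros i Hi; unfold c; rewrite !coef_in by lia.
    assert (INR (S i) * q (S i) <= INR (S (S i)) * q (S (S i))) by (apply Hmon; lia); lra.
  - intros HM2; apply Hgain, single_crossing_of_nonincreasing; intros x y Hxy.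
    apply taylor_le1_nonincreasing; [lia | exact Htop | lra].
Qed.
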